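(* Let $X$ be a Tychonoff space such that $C_k(X)$ is locally complete. If $X$ has an increasing sequence of functionally bounded subsets which swallows the compact subsets of $X$, then the strong dual of $C_k(X)$ has a $\mathfrak{G}$-base.
   Context: $C_k(X)$ is the space of continuous real-valued functions on $X$ with the compact-open topology. A subset $A\subseteq X$ is functionally bounded if every continuous real-valued function on $X$ is bounded on $A$. A sequence of sets swallows the compact sets if every compact subset of $X$ is contained in some member. A locally convex space is locally complete if every closed bounded absolutely convex subset $B$ is a Banach disc (its span normed by its Minkowski functional is a Banach space). Order $\mathbb{N}^{\mathbb{N}}$ pointwise; a $\mathfrak{G}$-base is a base of neighbourhoods of zero $\{U_\alpha:\alpha\in\mathbb{N}^{\mathbb{N}}\}$ with $U_\alpha\subseteq U_\beta$ whenever $\beta\le\alpha$. The strong dual carries the topology of uniform convergence on bounded sets. *)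

From HB Require Import structures.
From mathcomp Require Import all_boot all_order all_algebra.
From mathcomp Require Import all_classical all_reals all_analysis.
Set Implicit Arguments. Unset Strict Implicit. Unset Printing Implicit Defensive.
Import Order.TTheory GRing.Theory Num.Theory.
Import numFieldTopology.Exports numFieldNormedType.Exports.
Local Open Scope classical_set_scope.
Local Open Scope ring_scope.

Section Ck.
Context {R : realType} {X : topologicalType}.

Definition tychonoff_space : Prop :=
  hausdorff_space X /\
  forall (a : X) (B : set X), closed B -> ~ B a ->
    exists f : X -> R, continuous f /\ f a = 0 /\ (forall x, B x -> f x = 1)
      /\ (forall x, 0 <= f x <= 1).

Definition Ck : set {compact-open, X -> R} := [set f | continuous (f : X -> R)].

Definition zero_fun : {compact-open, X -> R} := fun _ => 0.

Definition Ck_nbhs0 (U : set {compact-open, X -> R}) : Prop :=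
  exists W, nbhs zero_fun W /\ W `&` Ck `<=` U.

Definition Ck_bounded (B : set {compact-open, X -> R}) : Prop :=
  B `<=` Ck /\
  forall U, Ck_nbhs0 U -> exists t : R, 0 < t /\
    forall f, B f -> U ((fun x => t * f x) : {compact-open, X -> R}).

Definition Ck_closed (B : set {compact-open, X -> R}) : Prop :=
  B `<=` Ck /\ closure B `&` Ck `<=` B.

Definition abs_convex (B : set {compact-open, X -> R}) : Prop :=
  forall f g a b, B f -> B g -> `|a| + `|b| <= 1 ->
    B ((fun x => a * f x + b * g x) : {compact-open, X -> R}).

Definition disc_span (B : set {compact-open, X -> R}) : set (X -> R) :=
  [set f | exists t : R, exists2 g, B g & f = (fun x => t * g x)].

Definition minkowski (B : set {compact-open, X -> R}) (f : X -> R) : R :=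
  inf [set t : R | 0 < t /\ exists2 g, B g & f = (fun x => t * g x)].

Definition banach_disc (B : set {compact-open, X -> R}) : Prop :=
  (forall f, disc_span B f -> minkowski B f = 0 -> f = (fun _ => 0)) /\
  forall u : nat -> (X -> R), (forall n, disc_span B (u n)) ->
    (forall e : R, 0 < e -> exists N, forall m n, (N <= m)%N -> (N <= n)%N ->
        minkowski B (fun x => u m x - u n x) < e) ->
    exists2 f, disc_span B f &
      forall e : R, 0 < e -> exists N, forall n, (N <= n)%N ->
        minkowski B (fun x => u n x - f x) < e.

Definition locally_complete_Ck : Prop :=
  forall B, Ck_closed B -> Ck_bounded B -> abs_convex B -> banach_disc B.

Definition functionally_bounded (A : set X) : Prop :=
  forall f : X -> R, continuous f -> exists M : R, forall x, A x -> `|f x| <= M.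

(** The (topological) dual of C_k(X): continuous linear functionals. Functionals
    are represented by maps on all functions; only their values on Ck matter. *)
Definition Ck_dual : set ({compact-open, X -> R} -> R) :=
  [set phi | (forall f g (a b : R), Ck f -> Ck g ->
       phi ((fun x => a * f x + b * g x) : {compact-open, X -> R})
         = a * phi f + b * phi g)
     /\ {within Ck, continuous phi}].

Definition strong_dual_nbhs0 (U : set ({compact-open, X -> R} -> R)) : Prop :=
  U `<=` Ck_dual /\
  exists B, Ck_bounded B /\ exists2 e : R, 0 < e &
    [set phi | Ck_dual phi /\ forall f, B f -> `|phi f| < e] `<=` U.

Definition strong_dual_has_Gbase : Prop :=
  exists U : (nat -> nat) -> set ({compact-open, X -> R} -> R),
    (forall a, strong_dual_nbhs0 (U a)) /\
    (forall V, strong_dual_nbhs0 V -> exists a, U a `<=` V) /\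
    (forall a b : nat -> nat, (forall i, (b i <= a i)%N) -> U a `<=` U b).

End Ck.

From Pilot Require Import Defs.
From HB Require Import structures.
From mathcomp Require Import all_boot all_order all_algebra.
From mathcomp Require Import all_classical all_reals all_analysis.
From mathcomp Require Import lra.
Import Order.TTheory GRing.Theory Num.Theory.
Import numFieldTopology.Exports numFieldNormedType.Exports.
Local Open Scope classical_set_scope.
Local Open Scope ring_scope.

(* For a bounded set B of C_k(X) put w(x) = sup_{f in B} |f x|.  Since w is
   bounded on compact sets, D = {f continuous : |f| <= w} is a closed bounded
   absolutely convex set, hence a Banach disc, and its Minkowski functional is
   the weighted sup norm sup |f| / w.  If B were unbounded on a functionally
   bounded set A, a gliding hump would produce g_n in B, x_n in A and the
   continuous partial sums u_(n+1) = u_n + c_n g_n, with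
   c_n = 2^-n / (1 + w x_0 + ... + w x_(n-1)) and
   c_n |g_n x_n| >= sup_A |u_n| + n + 3.  The series converges in the
   weighted norm to a continuous h; the choice of c_n makes all later humps
   negligible at x_n, so |h x_n| > n, contradicting the functional
   boundedness of A.  Hence every bounded set is bounded on every A_n, the
   sets {f : |f| <= a n on A_n}, a in N^N, are bounded (the A_n swallow the
   compact sets) and cofinal among the bounded sets, and their polars form a
   G-base. *)

Section RealFunctions.
Context {R : realType} {X : topologicalType}.

Lemma continuous_scale (a : R) {f : X -> R} :
  continuous f -> continuous (fun x => a * f x).
Proof.
move=> cf x; apply: (@continuousM _ _ (fun=> a) f x); last exact: cf.
exact: (@cst_continuous X R a x).
Qed.

Lemma continuous_lincomb (a b : R) {f g : X -> R} :
  continuous f -> continuous g -> continuous (fun x => a * f x + b * g x).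
Proof.
move=> cf cg x.
by apply: (@continuousD _ R^o _ (fun y => a * f y) (fun y => b * g y) x);
  exact: continuous_scale.
Qed.

End RealFunctions.

Section CompactOpen.
Context {R : realType} {X : topologicalType}.
Local Notation CO := {compact-open, X -> R}.

Lemma compact_open_nbhs_image (f : CO) (K : set X) (O : set R) :
  compact K -> open O -> f @` K `<=` O -> nbhs f [set g : CO | g @` K `<=` O].
Proof.
by move=> cK oO fKO; apply: open_nbhs_nbhs; split=> //; exact: compact_open_open.
Qed.

Lemma compact_open_nbhs_eval (f : CO) (x : X) (d : R) : 0 < d ->
  nbhs f [set g : CO | `|g x - f x| < d].
Proof.
move=> d0; have : nbhs f [set g : CO | g @` [set x] `<=` ball (f x) d].
  apply: compact_open_nbhs_image; [exact: compact_set1 | exact: ball_open |].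
  by move=> _ [_ -> <-]; exact: ballxx.
apply: filterS => g gx; have /= := gx (g x) (ex_intro2 _ _ x erefl erefl).
by rewrite -ball_normE /= distrC.
Qed.

Lemma compact_open_nbhs0_sup (K : set X) (e : R) : compact K -> 0 < e ->
  nbhs (zero_fun : CO) [set g : CO | forall x, K x -> `|g x| < e].
Proof.
move=> cK e0; have : nbhs (zero_fun : CO) [set g : CO | g @` K `<=` ball 0 e].
  apply: compact_open_nbhs_image => //; first exact: ball_open.
  by move=> _ [y _ <-]; exact: ballxx.
apply: filterS => g gK x Kx; have /= := gK (g x) (ex_intro2 _ _ x Kx erefl).
by rewrite -ball_normE /= sub0r normrN.
Qed.

Definition compact_uniform_nbhs0 : set_system CO :=
  filter_from [set Ke : set X * R | compact Ke.1 /\ 0 < Ke.2]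
    (fun Ke => [set g : CO | forall x, Ke.1 x -> `|g x| < Ke.2]).

Lemma compact_uniform_nbhs0_filter : Filter compact_uniform_nbhs0.
Proof.
apply: filter_from_filter; first by exists (set0, 1); split; [exact: compact0 | ].
move=> [K1 e1] [K2 e2] /= [cK1 e10] [cK2 e20].
exists (K1 `|` K2, Order.min e1 e2).
  by split; [exact: compactU | rewrite lt_min e10].
move=> g /= gK; split=> x Kx.
- by apply: lt_le_trans (gK x (or_introl Kx)) _; rewrite ge_min lexx.
- by apply: lt_le_trans (gK x (or_intror Kx)) _; rewrite ge_min lexx orbT.
Qed.

Lemma compact_open_nbhs0P {W : set CO} : nbhs (zero_fun : CO) W ->
  exists K e, [/\ compact K, 0 < e & [set g : CO | forall x, K x -> `|g x| < e] `<=` W].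
Proof.
move=> W0; suff /(_ W W0) : compact_uniform_nbhs0 --> (zero_fun : CO).
  by move=> [[K e] /= [cK e0] KeW]; exists K, e.
apply/(compact_open_cvgP _ compact_uniform_nbhs0_filter) => K V cK oV zKV.
have [V0|nV0] := pselect (V 0); last first.
  exists (K, 1) => [//|g _ y [x Kx _]]; exfalso; apply: nV0.
  exact: (zKV 0 (ex_intro2 _ _ x Kx erefl)).
move: oV; rewrite openE => /(_ _ V0) /nbhs_ballP [e /= e0 eV].
exists (K, e) => [//|g /= gK _ [x Kx <-]]; apply: eV.
by rewrite -ball_normE /= sub0r normrN; exact: gK.
Qed.

Lemma Ck_bounded_compactP {B : set CO} :
  Ck_bounded B <-> B `<=` Ck /\
    forall K, compact K -> exists r : R, forall f x, B f -> K x -> `|f x| <= r.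
Proof.
split=> [[BCk Babs]|[BCk Bsup]]; split=> //.
  move=> K cK; have [|t [t0 tB]] := Babs [set g : CO | forall x, K x -> `|g x| < 1].
    by exists [set g : CO | forall x, K x -> `|g x| < 1]; split;
      [exact: compact_open_nbhs0_sup | move=> g []].
  exists t^-1 => f x Bf Kx; have := tB f Bf x Kx; rewrite /= normrM gtr0_norm //.
  by rewrite -ltr_pdivlMl // mulr1 => /ltW.
move=> U [W [W0 WU]]; have [K [e [cK e0 KeW]]] := compact_open_nbhs0P W0.
have [r Br] := Bsup K cK.
have r1 : 0 < 1 + `|r| by rewrite ltr_pwDl.
exists (e / (1 + `|r|)); split=> [|f Bf]; first by rewrite divr_gt0.
apply: WU; split; last exact/continuous_scale/BCk.
apply: KeW => x Kx /=; rewrite normrM gtr0_norm ?divr_gt0 // mulrAC.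
rewrite ltr_pdivrMr // ltr_pM2l //; have := Br f x Bf Kx; have := ler_norm r; lra.
Qed.

End CompactOpen.

Section HalfPowers.
Context {R : realType}.

Lemma halfpow_increments_bound (v l : nat -> R) (b : R) (N : nat) :
  (forall k, v k.+1 = v k + l k) ->
  (forall j, (N <= j)%N -> `|l j| <= b * 2 ^- j) ->
  forall m, (N <= m)%N -> `|v m - v N| <= 2 * b * 2 ^- N.
Proof.
move=> vS lb m /subnKC <-; set d := (m - N)%N.
have pow_gt0 k : 0 < 2 ^- k :> R by rewrite invr_gt0 exprn_gt0.
have b0 : 0 <= b.
  by have := lb N (leqnn N); have := normr_ge0 (l N); have := pow_gt0 N; nra.
suff : `|v (N + d)%N - v N| <= 2 * b * (2 ^- N - 2 ^- (N + d)).
  by have := pow_gt0 (N + d)%N; nra.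
elim: d => [|d IH]; first by rewrite addn0 !subrr normr0 mulr0.
have -> : 2 ^- (N + d.+1) = 2 ^- (N + d) / 2 :> R by rewrite addnS exprSr invfM.
have := lb _ (leq_addr d N); have := ler_normD (v (N + d)%N - v N) (l (N + d)%N).
rewrite addnS vS addrAC; lra.
Qed.

Lemma exists_halfpow_lt (c : R) {e : R} : 0 < e -> exists N : nat, c * 2 ^- N < e.
Proof.
move=> e0; exists (Num.truncn (c / e)).+1; set N := (Num.truncn (c / e)).+1.
have ceN : c / e < N%:R by exact: truncnS_gt.
have N2N : N%:R < 2 ^+ N :> R by rewrite -natrX ltr_nat ltn_expl.
rewrite ltr_pdivrMr ?exprn_gt0 //; move: ceN; rewrite ltr_pdivrMr // => ceN.
nra.
Qed.

End HalfPowers.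

Section WeightedDisc.
Context {R : realType} {X : topologicalType}.
Local Notation CO := {compact-open, X -> R}.

Definition weighted_disc (w : X -> R) : set CO :=
  [set f | Ck f /\ forall x, `|f x| <= w x].

Definition weighted_cvg (w : X -> R) (u : nat -> X -> R) (h : X -> R) : Prop :=
  forall e, 0 < e -> exists N, forall n, (N <= n)%N ->
    forall x, `|u n x - h x| <= e * w x.

Context {w : X -> R}.
Hypothesis w_ge0 : forall x, 0 <= w x.
Local Notation D := (weighted_disc w).

Lemma weighted_disc_closed : Ck_closed D.
Proof.
split=> [f []//|f [clf cf]]; split=> // x; rewrite leNgt; apply/negP => wf.
have d0 : 0 < `|f x| - w x by rewrite subr_gt0.
have [g [[_ gw] /= gf]] := clf _ (compact_open_nbhs_eval f x _ d0).
have := gw x; have := lerB_dist (f x) (g x); rewrite distrC in gf; lra.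
Qed.

Lemma weighted_disc_abs_convex : abs_convex D.
Proof.
move=> f g a b [cf fw] [cg gw] ab; split=> [|x /=]; first exact: continuous_lincomb.
have := ler_normD (a * f x) (b * g x); rewrite !normrM.
have := fw x; have := gw x; have := w_ge0 x.
have := normr_ge0 a; have := normr_ge0 b.
have := normr_ge0 (f x); have := normr_ge0 (g x); nra.
Qed.

Lemma weighted_disc_bounded :
  (forall K, compact K -> exists r, forall x, K x -> w x <= r) -> Ck_bounded D.
Proof.
move=> wK; apply/Ck_bounded_compactP; split=> [f []//|K cK].
have [r wr] := wK K cK; exists r => f x [_ fw] Kx; exact: le_trans (fw x) (wr x Kx).
Qed.

Lemma weighted_disc_scale {v : X -> R} {t : R} : 0 < t -> continuous v ->
  (forall x, `|v x| <= t * w x) -> exists2 g, D g & v = (fun x => t * g x).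
Proof.
move=> t0 cv vw; exists (fun x => t^-1 * v x).
  split=> [|x]; first exact: continuous_scale.
  by rewrite normrM gtr0_norm ?invr_gt0 // ler_pdivrMl.
by apply: funext => x; rewrite mulrA mulfV ?mul1r ?gt_eqF.
Qed.

Lemma weighted_disc_spanP (v : X -> R) :
  disc_span D v <-> continuous v /\ exists2 t, 0 < t & forall x, `|v x| <= t * w x.
Proof.
split=> [[s [g [cg gw] ->]]|[cv [t t0 vw]]].
  split; first exact: continuous_scale.
  exists (`|s| + 1) => [|x]; first by rewrite ltr_pwDr.
  rewrite normrM; have := gw x; have := w_ge0 x; have := normr_ge0 s; nra.
by have [g Dg ->] := weighted_disc_scale t0 cv vw; exists t, g.
Qed.

Lemma weighted_disc_span_sub {u v : X -> R} :
  disc_span D u -> disc_span D v -> disc_span D (fun x => u x - v x).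
Proof.
move=> /weighted_disc_spanP [cu [s s0 uw]] /weighted_disc_spanP [cv [t t0 vw]].
apply/weighted_disc_spanP; split.
  by have := continuous_lincomb 1 (-1) cu cv; under eq_fun do rewrite mul1r mulN1r.
exists (s + t) => [|x]; first exact: addr_gt0.
have := ler_normB (u x) (v x); have := uw x; have := vw x; lra.
Qed.

Lemma minkowski_weighted_disc_le {v : X -> R} {t : R} : 0 < t -> continuous v ->
  (forall x, `|v x| <= t * w x) -> Defs.minkowski D v <= t.
Proof.
move=> t0 cv vw; apply: ge_inf; first by exists 0 => s [/ltW].
by split=> //; exact: weighted_disc_scale.
Qed.

Lemma minkowski_weighted_disc_lt (v : X -> R) (e : R) :
  disc_span D v -> Defs.minkowski D v < e -> forall x, `|v x| <= e * w x.
Proof.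
move=> /weighted_disc_spanP [cv [t t0 vw]] /inf_lt [].
  by exists t; split=> //; exact: weighted_disc_scale.
move=> s [s0 [g [_ gw] ->]] se x; rewrite normrM gtr0_norm //.
exact: le_trans (ler_wpM2l (ltW s0) (gw x)) (ler_wpM2r (w_ge0 x) (ltW se)).
Qed.

Lemma weighted_cauchy_cvg {u : nat -> X -> R} {b : R} : banach_disc D ->
  (forall n, continuous (u n)) -> (forall n x, `|u n x| <= b * w x) ->
  (forall e, 0 < e -> exists N, forall m n, (N <= m)%N -> (N <= n)%N ->
     forall x, `|u m x - u n x| <= e * w x) ->
  exists2 h, continuous h & weighted_cvg w u h.
Proof.
move=> [_ complete] cu uw cauchy.
have u_span n : disc_span D (u n).
  apply/weighted_disc_spanP; split=> //; exists (`|b| + 1) => [|x].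
    by rewrite ltr_pwDr.
  have := uw n x; have := ler_norm b; have := w_ge0 x; nra.
have [|h h_span hlim] := complete u u_span.
  move=> e e0; have [N uN] := cauchy (e / 2) (divr_gt0 e0 (ltr0n _ 2)).
  exists N => m n Nm Nn; apply: le_lt_trans (_ : e / 2 < e); last by lra.
  apply: minkowski_weighted_disc_le; [exact: divr_gt0 | | exact: uN].
  by case/weighted_disc_spanP: (weighted_disc_span_sub (u_span m) (u_span n)).
exists h; first by case/weighted_disc_spanP: h_span.
move=> e e0; have [N hN] := hlim e e0; exists N => n Nn.
exact/minkowski_weighted_disc_lt/hN/Nn/weighted_disc_span_sub.
Qed.

Lemma weighted_cvg_le {u : nat -> X -> R} {h : X -> R} {x : X} {n : nat} {c : R} :
  weighted_cvg w u h -> (forall m, (n <= m)%N -> `|u m x - u n x| <= c) ->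
  `|h x - u n x| <= c.
Proof.
move=> uh unc; rewrite distrC; apply/ler_addgt0Pr => e e0.
have w1 : 0 < 1 + w x by rewrite ltr_pwDl.
have [N hN] := uh (e / (1 + w x)) (divr_gt0 e0 w1).
have := hN _ (leq_maxl N n) x; have := unc _ (leq_maxr N n).
have : e / (1 + w x) * w x <= e.
  by rewrite mulrAC ler_pdivrMr // ler_pM2l //; lra.
have := ler_distD (u (maxn N n) x) (u n x) (h x).
rewrite (distrC (u n x) (u (maxn N n) x)); lra.
Qed.

Lemma halfpow_series_cvg {g : nat -> X -> R} {l : nat -> R} {u : nat -> X -> R} :
  banach_disc D -> (forall k, D (g k)) -> (forall k, `|l k| <= 2 ^- k) ->
  u 0%N = (fun=> 0) -> (forall k, u k.+1 = (fun x => u k x + l k * g k x)) ->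
  exists2 h, continuous h & weighted_cvg w u h.
Proof.
move=> Db Dg lk u0 uS.
have cu n : continuous (u n).
  elim: n => [|n IH]; first by rewrite u0; exact: cst_continuous.
  rewrite uS; have := continuous_lincomb 1 (l n) IH (Dg n).1.
  by under eq_fun do rewrite mul1r.
have uN x N m : (N <= m)%N -> `|u m x - u N x| <= 2 * w x * 2 ^- N.
  apply: (halfpow_increments_bound (u ^~ x) (fun k => l k * g k x)) => [k|j _].
    by rewrite uS.
  rewrite normrM mulrC; apply: ler_pM => //; first exact: (Dg j).2.
have uw n x : `|u n x| <= 2 * w x.
  by have := uN x 0%N n (leq0n n); rewrite u0 subr0 expr0 invr1 mulr1.
apply: (weighted_cauchy_cvg Db cu uw) => e e0.
have [N Ne] := exists_halfpow_lt 4 e0; exists N => m n Nm Nn x.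
have := uN x N m Nm; have := uN x N n Nn; have := ler_distD (u N x) (u m x) (u n x).
rewrite distrC (distrC (u N x)); have := w_ge0 x; have : 0 < 2 ^- N :> R.
  by rewrite invr_gt0 exprn_gt0.
nra.
Qed.

End WeightedDisc.

Section GlidingHump.
Context {R : realType} {X : topologicalType}.
Local Notation CO := {compact-open, X -> R}.
Context {A : set X} {B : set CO} {w : X -> R}.
Hypotheses (w_ge0 : forall x, 0 <= w x) (B_disc : B `<=` weighted_disc w).
Hypothesis disc_banach : banach_disc (weighted_disc w).
Context {bound_on_A : (X -> R) -> R}.
Hypothesis bound_on_AP :
  forall u, continuous u -> forall x, A x -> `|u x| <= bound_on_A u.
Context {pick : R -> CO * X}.
Hypothesis pickP :
  forall M, [/\ B (pick M).1, A (pick M).2 & M < `|(pick M).1 (pick M).2|].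

Definition hump_step (k : nat) (st : (X -> R) * R) : (X -> R) * R :=
  let c := 2 ^- k / (1 + st.2) in
  let p := pick ((bound_on_A st.1 + k%:R + 3) / c) in
  (fun x => st.1 x + c * p.1 x, st.2 + w p.2).

Fixpoint hump (n : nat) : (X -> R) * R :=
  if n is k.+1 then hump_step k (hump k) else (fun=> 0, 0).

Definition hump_sum (n : nat) : X -> R := (hump n).1.
Definition hump_mass (n : nat) : R := (hump n).2.
Definition hump_scale (n : nat) : R := 2 ^- n / (1 + hump_mass n).
Definition hump_target (n : nat) : R :=
  (bound_on_A (hump_sum n) + n%:R + 3) / hump_scale n.
Definition hump_pick (n : nat) : CO * X := pick (hump_target n).
Definition hump_fun (n : nat) : X -> R := (hump_pick n).1.
Definition hump_point (n : nat) : X := (hump_pick n).2.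

Lemma hump_sumS n :
  hump_sum n.+1 = (fun x => hump_sum n x + hump_scale n * hump_fun n x).
Proof. by []. Qed.

Lemma hump_massS n : hump_mass n.+1 = hump_mass n + w (hump_point n).
Proof. by []. Qed.

Lemma hump_mass_ge0 n : 0 <= hump_mass n.
Proof. by elim: n => [|n IH] //; rewrite hump_massS addr_ge0. Qed.

Lemma hump_scale_gt0 n : 0 < hump_scale n.
Proof. by rewrite divr_gt0 ?invr_gt0 ?exprn_gt0 // ltr_pwDl ?hump_mass_ge0. Qed.

Lemma hump_scale_mass n : hump_scale n * (1 + hump_mass n) = 2 ^- n.
Proof. by rewrite /hump_scale divfK // gt_eqF // ltr_pwDl ?hump_mass_ge0. Qed.

Lemma hump_scale_le n : hump_scale n <= 2 ^- n.
Proof.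
rewrite -hump_scale_mass ler_peMr ?(ltW (hump_scale_gt0 n)) //.
by rewrite lerDl hump_mass_ge0.
Qed.

Lemma hump_mass_ge {k j : nat} : (k < j)%N -> w (hump_point k) <= hump_mass j.
Proof.
elim: j => // j IH; rewrite ltnS leq_eqVlt hump_massS => /orP [/eqP ->|/IH kj].
  by rewrite lerDr hump_mass_ge0.
by rewrite (le_trans kj) // lerDl.
Qed.

Lemma hump_fun_disc n : weighted_disc w (hump_fun n).
Proof. by have [Bg _ _] := pickP (hump_target n); exact: B_disc. Qed.

Lemma hump_sum_continuous n : continuous (hump_sum n).
Proof.
elim: n => [|n IH]; first exact: cst_continuous.
rewrite hump_sumS; have := continuous_lincomb 1 (hump_scale n) IH (hump_fun_disc n).1.
by under eq_fun do rewrite mul1r.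
Qed.

Lemma hump_pickP n : A (hump_point n) /\
  `|hump_sum n (hump_point n)| + n%:R + 3
    <= hump_scale n * `|hump_fun n (hump_point n)|.
Proof.
have [_ Ax] := pickP (hump_target n).
rewrite ltr_pdivrMr ?hump_scale_gt0 // mulrC => /ltW large; split=> //.
apply: le_trans large; rewrite !lerD2r.
exact: bound_on_AP (hump_sum_continuous n) _ Ax.
Qed.

Lemma hump_sum_cvg : exists2 h, continuous h & weighted_cvg w hump_sum h.
Proof.
apply: (halfpow_series_cvg w_ge0 disc_banach hump_fun_disc) => // k.
by rewrite gtr0_norm ?hump_scale_gt0 ?hump_scale_le.
Qed.

Lemma hump_tail k m : (k < m)%N ->
  `|hump_sum m (hump_point k) - hump_sum k.+1 (hump_point k)| <= 1.
Proof.
move=> km; set x := hump_point k.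
have tail : `|hump_sum m x - hump_sum k.+1 x| <= 2 * 1 * 2 ^- k.+1.
  apply: (halfpow_increments_bound (hump_sum ^~ x)
    (fun j => hump_scale j * hump_fun j x)) => // j kj.
  rewrite mul1r normrM gtr0_norm ?hump_scale_gt0 // -hump_scale_mass.
  rewrite ler_pM2l ?hump_scale_gt0 //; apply: le_trans ((hump_fun_disc j).2 x) _.
  by rewrite (le_trans (hump_mass_ge kj)) // lerDr.
apply: le_trans tail _; rewrite mulr1 exprS invfM mulrA mulfV // mul1r.
by rewrite invf_le1 ?exprn_gt0 // exprn_ege1 // ler1n.
Qed.

Lemma hump_large {h : X -> R} : weighted_cvg w hump_sum h ->
  forall k, k%:R + 1 <= `|h (hump_point k)|.
Proof.
move=> uh k; set x := hump_point k; have [_ hump] := hump_pickP k.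
have := weighted_cvg_le w_ge0 uh (@hump_tail k); rewrite hump_sumS /= -/x.
set y := hump_sum k x; set z := hump_scale k * hump_fun k x => hx.
have := lerB_dist (y + z) (h x); rewrite (distrC (y + z)).
have := lerB_normD z y; rewrite (addrC z) normrM gtr0_norm ?hump_scale_gt0 //.
lra.
Qed.

Lemma gliding_hump : ~ @functionally_bounded R X A.
Proof.
move=> fbA; have [h ch uh] := hump_sum_cvg; have [M hM] := fbA h ch.
have [Ax _] := hump_pickP (Num.truncn M).
have := hM _ Ax; have := hump_large uh (Num.truncn M).
have := truncnS_gt M; rewrite -natr1; lra.
Qed.

End GlidingHump.

Section Envelope.
Context {R : realType} {X : topologicalType}.
Local Notation CO := {compact-open, X -> R}.

Definition envelope (B : set CO) (x : X) : R := sup [set `|f x| | f in B].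

Context {B : set CO}.
Hypothesis B_bounded : Ck_bounded B.

Lemma envelope_ubound x : exists r, forall f, B f -> `|f x| <= r.
Proof.
move/Ck_bounded_compactP: B_bounded => [_ /(_ _ (@compact_set1 _ x)) [r Br]].
by exists r => f Bf; exact: Br.
Qed.

Lemma le_envelope {f : CO} {x : X} : B f -> `|f x| <= envelope B x.
Proof.
move=> Bf; have [r Br] := envelope_ubound x.
apply: sup_upper_bound; last by exists f.
by split; [exists `|f x|, f | exists r => _ [g Bg <-]; exact: Br].
Qed.

Lemma envelope_ge0 x : 0 <= envelope B x.
Proof.
have [[f Bf]|] := pselect (B !=set0).
  exact: le_trans (normr_ge0 (f x)) (le_envelope Bf).
by move/set0P/negP/negPn/eqP => B0; rewrite /envelope B0 image_set0 sup0.
Qed.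

Lemma envelope_le x r : 0 <= r -> (forall f, B f -> `|f x| <= r) -> envelope B x <= r.
Proof.
move=> r0 Br; have [[f Bf]|] := pselect (B !=set0).
  by apply: ge_sup; [exists `|f x|, f | move=> _ [g Bg <-]; exact: Br].
by move/set0P/negP/negPn/eqP => B0; rewrite /envelope B0 image_set0 sup0.
Qed.

Lemma envelope_disc_bounded : Ck_bounded (weighted_disc (envelope B)).
Proof.
apply: weighted_disc_bounded => K cK.
move/Ck_bounded_compactP: B_bounded => [_ /(_ K cK) [r Br]].
exists `|r| => x Kx; apply: envelope_le => // f Bf.
exact: le_trans (Br f x Bf Kx) (ler_norm r).
Qed.

Lemma sub_envelope_disc : B `<=` weighted_disc (envelope B).
Proof.
move=> f Bf; split; first exact: B_bounded.1.
by move=> x; exact: le_envelope.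
Qed.

Lemma envelope_disc_banach :
  @locally_complete_Ck R X -> banach_disc (weighted_disc (envelope B)).
Proof.
move=> lc; apply: lc; first exact: weighted_disc_closed.
  exact: envelope_disc_bounded.
exact: weighted_disc_abs_convex envelope_ge0.
Qed.

End Envelope.

Lemma Ck_bounded_uniformly_on_functionally_bounded {R : realType} {X : topologicalType}
    (A : set X) (B : set {compact-open, X -> R}) :
  @locally_complete_Ck R X -> @functionally_bounded R X A -> Ck_bounded B ->
  exists M, forall f x, B f -> A x -> `|f x| <= M.
Proof.
move=> lc fbA bB; apply: contrapT => unbounded.
have /choice [pick pickP] : forall M : R,
    exists p : {compact-open, X -> R} * X, [/\ B p.1, A p.2 & M < `|p.1 p.2|].
  move=> M; apply: contrapT => noP; apply: unbounded; exists M => f x Bf Ax.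
  by rewrite leNgt; apply/negP => Mf; apply: noP; exists (f, x).
have /choice [bnd bndP] : forall u : X -> R,
    exists M, continuous u -> forall x, A x -> `|u x| <= M.
  move=> u; have [/fbA [M uM]|nc] := pselect (continuous u); first by exists M.
  by exists 0 => /nc.
exact: (gliding_hump (envelope_ge0 bB) (sub_envelope_disc bB)
  (envelope_disc_banach bB lc) bndP pickP).
Qed.

Section StrongDualGbase.
Context {R : realType} {X : topologicalType}.
Local Notation CO := {compact-open, X -> R}.
Variable A : nat -> set X.

Definition bounded_by (a : nat -> nat) : set CO :=
  [set f | Ck f /\ forall n x, A n x -> `|f x| <= (a n)%:R].

Definition polar_nbhs (a : nat -> nat) : set (CO -> R) :=
  [set phi | Ck_dual phi /\ forall f, bounded_by a f -> `|phi f| < ((a 0%N)%:R + 1)^-1].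

Lemma bounded_by_le {a b : nat -> nat} :
  (forall i, (b i <= a i)%N) -> bounded_by b `<=` bounded_by a.
Proof.
move=> ba f [cf fb]; split=> // n x Anx.
by apply: le_trans (fb n x Anx) _; rewrite ler_nat.
Qed.

Lemma polar_nbhs_le {a b : nat -> nat} :
  (forall i, (b i <= a i)%N) -> polar_nbhs a `<=` polar_nbhs b.
Proof.
move=> ba phi [dphi phib]; split=> // f /(bounded_by_le ba) /phib /lt_le_trans; apply.
by rewrite lef_pV2 ?posrE ?ltr_wpDl // lerD2r ler_nat.
Qed.

Hypothesis A_swallows : forall K, compact K -> exists n, K `<=` A n.

Lemma bounded_by_bounded a : Ck_bounded (bounded_by a).
Proof.
apply/Ck_bounded_compactP; split=> [f []//|K cK].
have [n KA] := A_swallows K cK; exists (a n)%:R => f x [_ fb] Kx; exact/fb/KA.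
Qed.

Lemma polar_nbhs_strong a : strong_dual_nbhs0 (polar_nbhs a).
Proof.
split=> [phi []//|]; exists (bounded_by a); split; first exact: bounded_by_bounded.
by exists ((a 0%N)%:R + 1)^-1; rewrite ?invr_gt0 ?ltr_wpDl.
Qed.

Hypothesis A_functionally_bounded : forall n, @functionally_bounded R X (A n).

Lemma Ck_bounded_sub_bounded_by (B : set CO) :
  @locally_complete_Ck R X -> Ck_bounded B -> exists a, B `<=` bounded_by a.
Proof.
move=> lc bB; have /choice [M BM] : forall n, exists M : R,
    forall f x, B f -> A n x -> `|f x| <= M.
  by move=> n; exact: Ck_bounded_uniformly_on_functionally_bounded.
exists (fun n => (Num.truncn (M n)).+1) => f Bf; split; first exact: bB.1.
by move=> n x Anx; apply/ltW/(le_lt_trans (BM n f x Bf Anx)); exact: truncnS_gt.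
Qed.

Lemma polar_nbhs_cofinal V : @locally_complete_Ck R X -> strong_dual_nbhs0 V ->
  exists a, polar_nbhs a `<=` V.
Proof.
move=> lc [_ [B [bB [e e0 BeV]]]]; have [a Ba] := Ck_bounded_sub_bounded_by B lc bB.
pose a' i := (a i + Num.truncn e^-1)%N.
have aa' i : (a i <= a' i)%N by exact: leq_addr.
exists a' => phi [dphi phia]; apply: BeV; split=> // f /Ba /(bounded_by_le aa') /phia.
move/lt_le_trans; apply; rewrite -[leRHS]invrK lef_pV2 ?posrE ?invr_gt0 ?ltr_wpDl //.
apply/ltW/(lt_le_trans (truncnS_gt _)).
by rewrite -natr1 lerD2r ler_nat leq_addl.
Qed.

End StrongDualGbase.

Theorem corollary2p8 (R : realType) (X : topologicalType) :
  @tychonoff_space R X ->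
  @locally_complete_Ck R X ->
  (exists A : nat -> set X,
      (forall n, @functionally_bounded R X (A n)) /\
      (forall n, A n `<=` A n.+1) /\
      (forall K : set X, compact K -> exists n, K `<=` A n)) ->
  @strong_dual_has_Gbase R X.
Proof.
move=> _ lc [A [fbA [_ swA]]]; exists (polar_nbhs A); split; [|split].
- exact: polar_nbhs_strong.
- by move=> V; exact: polar_nbhs_cofinal.
- exact: polar_nbhs_le.
Qed.
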